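(* Let $\alpha\in(0,0.4701)$ and let $c^{(\alpha)}_{i,k}$ be the L1-2 coefficients defined in the context. Then, for sufficiently small temporal stepsize $\tau$, $$\frac{1}{c^{(\alpha)}_{1,k}}<C^{(\alpha)}(k\tau)^{\alpha},\qquad k\ge1,$$ where $C^{(\alpha)}=\max\Big\{\frac{6\Gamma(1-\alpha)}{\tilde a^{\alpha}},\frac{3\Gamma(2-\alpha)}{\alpha\,\tilde a^{\alpha}}\Big\}$.
   Context: Let $\tilde a>0$, $T>\tilde a$, $N\in\mathbb{Z}^+$, $\tau=(T-\tilde a)/N$, $t_k=\tilde a+k\tau$ ($k=0,\dots,N$). Define $a^{(\alpha)}_{i,k}=\big(\log\frac{t_k}{t_{i-1}}\big)^{1-\alpha}-\big(\log\frac{t_k}{t_i}\big)^{1-\alpha}$ and, for $i\ge2$, $$b^{(\alpha)}_{i,k}=\frac{1}{\log\frac{t_i}{t_{i-2}}}\Big\{\log\tfrac{t_i}{t_{i-1}}\Big[\Big(\log\tfrac{t_k}{t_i}\Big)^{1-\alpha}+\Big(\log\tfrac{t_k}{t_{i-1}}\Big)^{1-\alpha}\Big]+\tfrac{2}{2-\alpha}\Big[\Big(\log\tfrac{t_k}{t_i}\Big)^{2-\alpha}-\Big(\log\tfrac{t_k}{t_{i-1}}\Big)^{2-\alpha}\Big]\Big\}.$$ The coefficients are: $c^{(\alpha)}_{1,1}=\frac{a^{(\alpha)}_{1,1}}{\Gamma(2-\alpha)\log\frac{t_1}{t_0}}$; for $k=2$: $c^{(\alpha)}_{1,2}=\frac{a^{(\alpha)}_{1,2}+b^{(\alpha)}_{2,2}}{\Gamma(2-\alpha)\log\frac{t_1}{t_0}}$,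 $c^{(\alpha)}_{2,2}=\frac{a^{(\alpha)}_{2,2}-b^{(\alpha)}_{2,2}}{\Gamma(2-\alpha)\log\frac{t_2}{t_1}}$; for $k\ge3$: $c^{(\alpha)}_{1,k}=\frac{a^{(\alpha)}_{1,k}+b^{(\alpha)}_{2,k}}{\Gamma(2-\alpha)\log\frac{t_1}{t_0}}$, $c^{(\alpha)}_{i,k}=\frac{a^{(\alpha)}_{i,k}-b^{(\alpha)}_{i,k}+b^{(\alpha)}_{i+1,k}}{\Gamma(2-\alpha)\log\frac{t_i}{t_{i-1}}}$ for $2\le i\le k-1$, and $c^{(\alpha)}_{k,k}=\frac{a^{(\alpha)}_{k,k}-b^{(\alpha)}_{k,k}}{\Gamma(2-\alpha)\log\frac{t_k}{t_{k-1}}}$. *)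

From Stdlib Require Import Reals.
From Coquelicot Require Import Coquelicot.
Open Scope R_scope.

(* Real power x^p for x >= 0, with the convention 0^p = 0 (p > 0 here). *)
Definition rpow (x p : R) : R := if Rle_dec x 0 then 0 else Rpower x p.

Definition Gamma (s : R) : R :=
  RInt_gen (fun t => Rpower t (s - 1) * exp (- t)) (at_right 0) (Rbar_locally p_infty).

Definition tau (a0 T : R) (N : nat) : R := (T - a0) / INR N.
Definition tk (a0 T : R) (N : nat) (k : nat) : R := a0 + INR k * tau a0 T N.

Definition acoef (a0 T : R) (N : nat) (al : R) (i k : nat) : R :=
  let t := tk a0 T N in
  rpow (ln (t k / t (i - 1)%nat)) (1 - al) - rpow (ln (t k / t i)) (1 - al).

Definition bcoef (a0 T : R) (N : nat) (al : R) (i k : nat) : R :=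
  let t := tk a0 T N in
  / ln (t i / t (i - 2)%nat) *
  ( ln (t i / t (i - 1)%nat) *
      (rpow (ln (t k / t i)) (1 - al) + rpow (ln (t k / t (i - 1)%nat)) (1 - al))
    + 2 / (2 - al) *
      (rpow (ln (t k / t i)) (2 - al) - rpow (ln (t k / t (i - 1)%nat)) (2 - al))).

Definition ccoef (a0 T : R) (N : nat) (al : R) (i k : nat) : R :=
  let t := tk a0 T N in
  let den := Gamma (2 - al) * ln (t i / t (i - 1)%nat) in
  if (k =? 1)%nat then acoef a0 T N al 1 1 / den
  else if (i =? 1)%nat then (acoef a0 T N al 1 k + bcoef a0 T N al 2 k) / den
  else if (i =? k)%nat then (acoef a0 T N al k k - bcoef a0 T N al k k) / den
  else (acoef a0 T N al i k - bcoef a0 T N al i k + bcoef a0 T N al (i + 1) k) / den.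

Definition Calpha (a0 al : R) : R :=
  Rmax (6 * Gamma (1 - al) / Rpower a0 al) (3 * Gamma (2 - al) / (al * Rpower a0 al)).

From Stdlib Require Import Reals Lra Lia Psatz.
From Coquelicot Require Import Coquelicot.
Open Scope R_scope.

(* In the logarithmic variables h1 = ln (t_1 / t_0) and L0 = ln (t_k / t_0), the
   numerator a_{1,k} + b_{2,k} of c_{1,k} is at least kappa * h1 * L0^(-al) with
   kappa > al / 3.  For k = 1 this is an identity (kappa = 1); for k = 2 it follows
   from the concavity of x^(1-al) (kappa = 1 - al - al / (2 - al)); for k >= 3 the
   b-part is a trapezoid-rule error, controlled by the convexity of x^(2-al) once
   L0 <= 4 ln (t_k / t_2), which holds when tau <= a0 / 6 (kappa = 3 (1 - al)^2 / 4).
   Both values of kappa exceed al / 3 as soon as al < 1/2.  Hence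
   1 / c_{1,k} < 3 Gamma(2 - al) / al * L0^al, and ln (1 + x) <= x gives
   L0 <= k tau / a0.  Gamma(2 - al) > 0 requires the improper integral to exist,
   which follows from the Cauchy criterion at both ends. *)

Lemma Rpower_pos (x e : R) : 0 < Rpower x e.
Proof. apply exp_pos. Qed.

Lemma Rpower_1_l (e : R) : Rpower 1 e = 1.
Proof. unfold Rpower. rewrite ln_1, Rmult_0_r. apply exp_0. Qed.

Lemma Rpower_plus_1 (x e : R) : 0 < x -> Rpower x (e + 1) = x * Rpower x e.
Proof. intros Hx. rewrite Rpower_plus, Rpower_1 by exact Hx. ring. Qed.

Lemma Rle_Rpower_l_npos (a b e : R) : e <= 0 -> 0 < a <= b -> Rpower b e <= Rpower a e.
Proof.
  intros He Hab. rewrite <- (Ropp_involutive e), !(Rpower_Ropp _ (- e)).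
  apply Rinv_le_contravar; [apply Rpower_pos | apply Rle_Rpower_l; lra].
Qed.

Lemma rpow_pos (x e : R) : 0 < x -> rpow x e = Rpower x e.
Proof. intros Hx. unfold rpow. destruct (Rle_dec x 0); [lra | reflexivity]. Qed.

Lemma rpow_0_l (e : R) : rpow 0 e = 0.
Proof. unfold rpow. destruct (Rle_dec 0 0); [reflexivity | lra]. Qed.

Lemma Rpower_mean_value (r x y : R) : 0 < x < y ->
  exists c, x < c < y /\ Rpower y r - Rpower x r = r * Rpower c (r - 1) * (y - x).
Proof.
  intros Hxy.
  destruct (MVT_cor2 (fun z => Rpower z r) (fun z => r * Rpower z (r - 1)) x y)
    as [c [E Hc]]; [lra | | exists c; auto].
  intros z Hz. apply derivable_pt_lim_power. lra.
Qed.

Lemma Rpower_concave_tangent (r x y : R) : 0 <= r <= 1 -> 0 < x -> 0 < y ->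
  Rpower y r <= Rpower x r + r * Rpower x (r - 1) * (y - x).
Proof.
  intros Hr Hx Hy. destruct (Rtotal_order x y) as [Hxy | [<- | Hyx]].
  - destruct (Rpower_mean_value r x y) as [c [Hc E]]; [lra |].
    assert (Rpower c (r - 1) <= Rpower x (r - 1)) by (apply Rle_Rpower_l_npos; lra).
    assert (0 <= r * ((Rpower x (r - 1) - Rpower c (r - 1)) * (y - x)))
      by (apply Rmult_le_pos; [| apply Rmult_le_pos]; lra).
    lra.
  - lra.
  - destruct (Rpower_mean_value r y x) as [c [Hc E]]; [lra |].
    assert (Rpower x (r - 1) <= Rpower c (r - 1)) by (apply Rle_Rpower_l_npos; lra).
    assert (0 <= r * ((Rpower c (r - 1) - Rpower x (r - 1)) * (x - y)))
      by (apply Rmult_le_pos; [| apply Rmult_le_pos]; lra).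
    lra.
Qed.

Lemma Rpower_convex_tangent (r x y : R) : 1 <= r -> 0 < x -> 0 < y ->
  Rpower x r + r * Rpower x (r - 1) * (y - x) <= Rpower y r.
Proof.
  intros Hr Hx Hy. destruct (Rtotal_order x y) as [Hxy | [<- | Hyx]].
  - destruct (Rpower_mean_value r x y) as [c [Hc E]]; [lra |].
    assert (Rpower x (r - 1) <= Rpower c (r - 1)) by (apply Rle_Rpower_l; lra).
    assert (0 <= r * ((Rpower c (r - 1) - Rpower x (r - 1)) * (y - x)))
      by (apply Rmult_le_pos; [| apply Rmult_le_pos]; lra).
    lra.
  - lra.
  - destruct (Rpower_mean_value r y x) as [c [Hc E]]; [lra |].
    assert (Rpower c (r - 1) <= Rpower x (r - 1)) by (apply Rle_Rpower_l; lra).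
    assert (0 <= r * ((Rpower x (r - 1) - Rpower c (r - 1)) * (x - y)))
      by (apply Rmult_le_pos; [| apply Rmult_le_pos]; lra).
    lra.
Qed.

Lemma Rpower_increment_ge (al x h : R) : 0 < al < 1 -> 0 < x -> 0 < h ->
  (1 - al) * h * Rpower (x + h) (- al) <= Rpower (x + h) (1 - al) - Rpower x (1 - al).
Proof.
  intros Hal Hx Hh.
  assert (T := Rpower_concave_tangent (1 - al) (x + h) x ltac:(lra) ltac:(lra) Hx).
  replace (1 - al - 1) with (- al) in T by ring. lra.
Qed.

Lemma Rpower_4_le (al : R) : 0 <= al <= 1 -> Rpower 4 al <= 1 + 3 * al.
Proof.
  intros Hal. assert (T := Rpower_concave_tangent al 1 4 Hal ltac:(lra) ltac:(lra)).
  rewrite !Rpower_1_l in T. lra.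
Qed.

(* The right-hand side is twice the error of the trapezoid rule for the integral of
   x^(1-al) over [x, x + h]. *)
Lemma Rpower_trapezoid_defect (al x h : R) : 0 < al < 1 -> 0 < x -> 0 < h ->
  - (1 - al) * h ^ 2 * Rpower x (- al) / 2 <=
  h * (Rpower x (1 - al) + Rpower (x + h) (1 - al))
  + 2 / (2 - al) * (Rpower x (2 - al) - Rpower (x + h) (2 - al)).
Proof.
  intros Hal Hx Hh. set (m := x + h / 2).
  assert (T1 := Rpower_convex_tangent (2 - al) (x + h) m ltac:(lra) ltac:(lra) ltac:(unfold m; lra)).
  assert (T2 := Rpower_convex_tangent (2 - al) m x ltac:(lra) ltac:(unfold m; lra) Hx).
  assert (T3 := Rpower_concave_tangent (1 - al) x m ltac:(lra) Hx ltac:(unfold m; lra)).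
  replace (2 - al - 1) with (1 - al) in T1, T2 by ring.
  replace (1 - al - 1) with (- al) in T3 by ring.
  assert (Hint : Rpower (x + h) (2 - al) - Rpower x (2 - al)
                 <= (2 - al) * (Rpower (x + h) (1 - al) + Rpower m (1 - al)) * (h / 2))
    by (unfold m in *; nra).
  assert (Hscaled : 2 / (2 - al) * (Rpower x (2 - al) - Rpower (x + h) (2 - al))
                    >= - h * (Rpower (x + h) (1 - al) + Rpower m (1 - al))).
  { assert (E : 2 / (2 - al) * ((2 - al) * (Rpower (x + h) (1 - al) + Rpower m (1 - al)) * (h / 2))
                = h * (Rpower (x + h) (1 - al) + Rpower m (1 - al))) by (field; lra).
    assert (0 <= 2 / (2 - al)) by (apply Rdiv_le_0_compat; lra).
    nra. }
  assert (Hmid : h * (Rpower m (1 - al) - Rpower x (1 - al))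
                 <= h * ((1 - al) * Rpower x (- al) * (h / 2)))
    by (apply Rmult_le_compat_l; unfold m in *; lra).
  nra.
Qed.

(* The numerator a_{1,k} + b_{2,k} of c_{1,k}, k >= 2, in the logarithmic variables
   L2 = ln (t_k / t_2), h2 = ln (t_2 / t_1) and h1 = ln (t_1 / t_0). *)
Definition c1_numerator (al L2 h2 h1 : R) : R :=
  rpow (L2 + h2 + h1) (1 - al) - rpow (L2 + h2) (1 - al)
  + / (h2 + h1) * (h2 * (rpow L2 (1 - al) + rpow (L2 + h2) (1 - al))
                   + 2 / (2 - al) * (rpow L2 (2 - al) - rpow (L2 + h2) (2 - al))).

Lemma c1_numerator_ge_2 (al h2 h1 : R) : 0 < al < 1 -> 0 < h2 <= h1 ->
  (1 - al - al / (2 - al)) * h1 * Rpower (h2 + h1) (- al) <= c1_numerator al 0 h2 h1.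
Proof.
  intros Hal Hh. unfold c1_numerator.
  rewrite !rpow_0_l, !Rplus_0_l, !rpow_pos by lra.
  set (L0 := h2 + h1). set (W := Rpower L0 (- al)).
  assert (HW : 0 < W) by apply Rpower_pos.
  assert (Ha := Rpower_increment_ge al h2 h1 Hal ltac:(lra) ltac:(lra)).
  fold L0 W in Ha.
  assert (E0 : Rpower L0 (1 - al) = L0 * W).
  { replace (1 - al) with (- al + 1) by ring. apply Rpower_plus_1. unfold L0; lra. }
  assert (E2 : Rpower h2 (2 - al) = h2 * Rpower h2 (1 - al)).
  { replace (2 - al) with (1 - al + 1) by ring. apply Rpower_plus_1. lra. }
  assert (HV : Rpower h2 (1 - al) <= L0 * W)
    by (rewrite <- E0; apply Rle_Rpower_l; unfold L0; lra).
  assert (Eb : / L0 * (h2 * Rpower h2 (1 - al) + 2 / (2 - al) * (0 - Rpower h2 (2 - al)))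
               = - (al / (2 - al)) * (h2 * Rpower h2 (1 - al) / L0))
    by (rewrite E2; field; unfold L0; lra).
  assert (Hk : h2 * Rpower h2 (1 - al) / L0 <= h1 * W).
  { apply Rmult_le_reg_r with L0; [unfold L0; lra |].
    replace (h2 * Rpower h2 (1 - al) / L0 * L0) with (h2 * Rpower h2 (1 - al))
      by (field; unfold L0; lra).
    assert (0 <= Rpower h2 (1 - al)) by (left; apply Rpower_pos).
    nra. }
  assert (0 <= al / (2 - al)) by (apply Rdiv_le_0_compat; lra).
  rewrite Eb. nra.
Qed.

Lemma c1_numerator_ge (al L2 h2 h1 : R) : 0 < al < 1 -> 0 < L2 -> 0 < h2 <= h1 ->
  L2 + h2 + h1 <= 4 * L2 ->
  3 * (1 - al) ^ 2 / 4 * h1 * Rpower (L2 + h2 + h1) (- al) <= c1_numerator al L2 h2 h1.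
Proof.
  intros Hal HL2 Hh H4. unfold c1_numerator. rewrite !rpow_pos by lra.
  set (W := Rpower (L2 + h2 + h1) (- al)). set (Z := Rpower L2 (- al)).
  assert (HW : 0 < W) by apply Rpower_pos.
  assert (HZ : 0 < Z) by apply Rpower_pos.
  assert (Ha := Rpower_increment_ge al (L2 + h2) h1 Hal ltac:(lra) ltac:(lra)).
  assert (Hd := Rpower_trapezoid_defect al L2 h2 Hal HL2 ltac:(lra)).
  fold W in Ha. fold Z in Hd.
  assert (HZW : Z <= (1 + 3 * al) * W).
  { assert (Rpower (L2 + h2 + h1) al <= Rpower 4 al * Rpower L2 al).
    { rewrite Rpower_mult_distr by lra. apply Rle_Rpower_l; lra. }
    assert (Rpower 4 al <= 1 + 3 * al) by (apply Rpower_4_le; lra).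
    unfold Z, W. rewrite !Rpower_Ropp.
    apply Rmult_le_reg_r with (Rpower (L2 + h2 + h1) al * Rpower L2 al).
    { apply Rmult_lt_0_compat; apply Rpower_pos. }
    assert (0 < Rpower (L2 + h2 + h1) al) by apply Rpower_pos.
    assert (0 < Rpower L2 al) by apply Rpower_pos.
    replace (/ Rpower L2 al * (Rpower (L2 + h2 + h1) al * Rpower L2 al))
      with (Rpower (L2 + h2 + h1) al) by (field; lra).
    replace ((1 + 3 * al) * / Rpower (L2 + h2 + h1) al * (Rpower (L2 + h2 + h1) al * Rpower L2 al))
      with ((1 + 3 * al) * Rpower L2 al) by (field; lra).
    nra. }
  assert (Hq : h2 ^ 2 / (h2 + h1) <= h1 / 2).
  { apply Rmult_le_reg_r with (h2 + h1); [lra |].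
    replace (h2 ^ 2 / (h2 + h1) * (h2 + h1)) with (h2 ^ 2) by (field; lra). nra. }
  assert (Hb : / (h2 + h1) * (h2 * (Rpower L2 (1 - al) + Rpower (L2 + h2) (1 - al))
                 + 2 / (2 - al) * (Rpower L2 (2 - al) - Rpower (L2 + h2) (2 - al)))
               >= - (1 - al) * (1 + 3 * al) * W * h1 / 4).
  { assert (Hp : 0 < / (h2 + h1)) by (apply Rinv_0_lt_compat; lra).
    assert (E : / (h2 + h1) * (- (1 - al) * h2 ^ 2 * Z / 2)
                = - (1 - al) * Z * (h2 ^ 2 / (h2 + h1)) / 2) by (field; lra).
    assert (Zb : (1 - al) * Z * (h2 ^ 2 / (h2 + h1)) <= (1 - al) * ((1 + 3 * al) * W) * (h1 / 2)).
    { assert (0 <= h2 ^ 2 / (h2 + h1)) by (apply Rdiv_le_0_compat; nra).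
      apply Rmult_le_compat; [nra | lra | | lra]. apply Rmult_le_compat_l; lra. }
    nra. }
  nra.
Qed.

Definition Gamma_integrand (s t : R) : R := Rpower t (s - 1) * exp (- t).

Definition Gamma_primitive (s y : R) : R := RInt (Gamma_integrand s) 1 y.

Lemma Gamma_integrand_pos (s t : R) : 0 < Gamma_integrand s t.
Proof. apply Rmult_lt_0_compat; apply exp_pos. Qed.

Lemma Gamma_integrand_continuous (s t : R) : 0 < t -> continuous (Gamma_integrand s) t.
Proof.
  intros Ht. apply (@ex_derive_continuous R_AbsRing R_NormedModule).
  unfold Gamma_integrand, Rpower. auto_derive. lra.
Qed.

Lemma ex_RInt_Gamma_integrand (s u v : R) : 0 < u -> 0 < v -> ex_RInt (Gamma_integrand s) u v.
Proof.
  intros Hu Hv. apply (@ex_RInt_continuous R_CompleteNormedModule).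
  intros z Hz. apply Gamma_integrand_continuous.
  assert (0 < Rmin u v) by (apply Rmin_glb_lt; lra). lra.
Qed.

Lemma RInt_Gamma_integrand_ge0 (s u v : R) : 0 < u <= v -> 0 <= RInt (Gamma_integrand s) u v.
Proof.
  intros Huv. apply RInt_ge_0; [lra | apply ex_RInt_Gamma_integrand; lra |].
  intros; left; apply Gamma_integrand_pos.
Qed.

Lemma Gamma_primitive_sub (s u v : R) : 0 < u -> 0 < v ->
  Gamma_primitive s v - Gamma_primitive s u = RInt (Gamma_integrand s) u v.
Proof.
  intros Hu Hv. unfold Gamma_primitive.
  rewrite <- (RInt_Chasles (Gamma_integrand s) 1 u v)
    by (apply ex_RInt_Gamma_integrand; lra).
  unfold plus; simpl. ring.
Qed.

Lemma Gamma_primitive_le (s u v : R) : 0 < u <= v -> Gamma_primitive s u <= Gamma_primitive s v.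
Proof.
  intros Huv. assert (E := Gamma_primitive_sub s u v ltac:(lra) ltac:(lra)).
  assert (H := RInt_Gamma_integrand_ge0 s u v Huv). lra.
Qed.

Lemma is_derive_Gamma_primitive (s x : R) : 0 < x ->
  is_derive (Gamma_primitive s) x (Gamma_integrand s x).
Proof.
  intros Hx. apply (@is_derive_RInt R_CompleteNormedModule) with (a := 1).
  - assert (Hx2 : 0 < x / 2) by lra. exists (mkposreal _ Hx2).
    intros y Hy. apply RInt_correct, ex_RInt_Gamma_integrand; [lra |].
    apply Rabs_lt_between' in Hy. simpl in Hy. lra.
  - apply Gamma_integrand_continuous. exact Hx.
Qed.

Lemma Gamma_integrand_le_1 (s t : R) : 1 <= s -> 0 < t <= 1 -> Gamma_integrand s t <= 1.
Proof.
  intros Hs Ht. unfold Gamma_integrand.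
  assert (Hp : Rpower t (s - 1) <= Rpower 1 (s - 1)) by (apply Rle_Rpower_l; lra).
  rewrite Rpower_1_l in Hp.
  assert (He : exp (- t) <= 1) by (rewrite <- exp_0; left; apply exp_increasing; lra).
  apply Rle_trans with (1 * 1); [| lra].
  apply Rmult_le_compat; [left; apply Rpower_pos | left; apply exp_pos | exact Hp | exact He].
Qed.

Lemma Gamma_integrand_le_exp (s t : R) : 1 <= s <= 2 -> 1 <= t ->
  Gamma_integrand s t <= 2 * exp (- t / 2).
Proof.
  intros Hs Ht. unfold Gamma_integrand.
  assert (Hp : Rpower t (s - 1) <= t)
    by (rewrite <- (Rpower_1 t) at 2 by lra; apply Rle_Rpower; lra).
  assert (Esplit : exp (- t) = exp (- t / 2) * exp (- t / 2))
    by (rewrite <- exp_plus; f_equal; field).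
  assert (Einv : exp (- t / 2) * exp (t / 2) = 1)
    by (rewrite <- exp_plus, <- exp_0; f_equal; field).
  assert (Hlin := exp_ineq1_le (t / 2)).
  assert (0 < exp (- t / 2)) by apply exp_pos.
  assert (Ht2 : t * exp (- t / 2) <= 2) by nra.
  assert (0 < exp (- t)) by apply exp_pos.
  rewrite Esplit. nra.
Qed.

Lemma RInt_exp_neg_half (u v : R) :
  RInt (fun t => 2 * exp (- t / 2)) u v = 4 * exp (- u / 2) - 4 * exp (- v / 2).
Proof.
  apply is_RInt_unique.
  replace (4 * exp (- u / 2) - 4 * exp (- v / 2))
    with (minus ((fun t => - 4 * exp (- t / 2)) v) ((fun t => - 4 * exp (- t / 2)) u))
    by (unfold minus, plus, opp; simpl; ring).
  apply (@is_RInt_derive R_CompleteNormedModule (fun t => - 4 * exp (- t / 2))).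
  - intros x _. auto_derive; [exact I |]. unfold Rdiv. field.
  - intros x _. apply (@ex_derive_continuous R_AbsRing R_NormedModule). auto_derive. exact I.
Qed.

Lemma RInt_Gamma_integrand_tail (s u v : R) : 1 <= s <= 2 -> 1 <= u <= v ->
  RInt (Gamma_integrand s) u v < 8 / u.
Proof.
  intros Hs Huv.
  assert (Hle : RInt (Gamma_integrand s) u v <= 4 * exp (- u / 2) - 4 * exp (- v / 2)).
  { rewrite <- RInt_exp_neg_half. apply RInt_le; [lra | apply ex_RInt_Gamma_integrand; lra | |].
    - apply (@ex_RInt_continuous R_CompleteNormedModule). intros z _.
      apply (@ex_derive_continuous R_AbsRing R_NormedModule). auto_derive. exact I.
    - intros x Hx. apply Gamma_integrand_le_exp; lra. }
  assert (0 < exp (- v / 2)) by apply exp_pos.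
  assert (Einv : exp (- u / 2) * exp (u / 2) = 1)
    by (rewrite <- exp_plus, <- exp_0; f_equal; field).
  assert (Hlin := exp_ineq1_le (u / 2)).
  assert (0 < exp (- u / 2)) by apply exp_pos.
  assert (4 * exp (- u / 2) * u < 8) by nra.
  apply Rmult_lt_reg_r with u; [lra |].
  replace (8 / u * u) with 8 by (field; lra). nra.
Qed.

Lemma filterlim_cauchy_le (F : (R -> Prop) -> Prop) {FF : ProperFilter F} (f : R -> R) :
  (forall eps : posreal, exists P : R -> Prop,
     F P /\ forall u v, P u -> P v -> u <= v -> Rabs (f v - f u) < eps) ->
  exists l, filterlim f F (locally l).
Proof.
  intros Hc. apply (filterlim_locally_cauchy (U := R_CompleteSpace)). intros eps.
  destruct (Hc eps) as [P [HP Hf]]. exists P. split; [exact HP |].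
  intros u v Hu Hv. destruct (Rle_or_lt u v) as [Huv | Hvu].
  - exact (Hf u v Hu Hv Huv).
  - apply ball_sym. exact (Hf v u Hv Hu (Rlt_le _ _ Hvu)).
Qed.

Lemma Gamma_primitive_lim_0 (s : R) : 1 <= s ->
  exists l, filterlim (Gamma_primitive s) (at_right 0) (locally l).
Proof.
  intros Hs. apply (filterlim_cauchy_le _ (FF := at_right_proper_filter 0)). intros eps.
  assert (Hd : 0 < Rmin 1 eps) by (apply Rmin_glb_lt; [lra | apply cond_pos]).
  exists (fun u => 0 < u < Rmin 1 eps). split.
  - exists (mkposreal _ Hd). intros y Hy Hy0.
    apply Rabs_lt_between' in Hy. simpl in Hy. lra.
  - intros u v Hu Hv Huv.
    assert (Hm1 := Rmin_l 1 eps). assert (Hm2 := Rmin_r 1 eps).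
    rewrite Gamma_primitive_sub by lra.
    rewrite Rabs_pos_eq by (apply RInt_Gamma_integrand_ge0; lra).
    apply Rle_lt_trans with (RInt (fun _ => 1) u v).
    + apply RInt_le; [lra | apply ex_RInt_Gamma_integrand; lra | apply ex_RInt_const |].
      intros t Ht. apply Gamma_integrand_le_1; lra.
    + rewrite RInt_const. unfold scal; simpl; unfold mult; simpl. lra.
Qed.

Lemma Gamma_primitive_lim_infty (s : R) : 1 <= s <= 2 ->
  exists l, filterlim (Gamma_primitive s) (Rbar_locally p_infty) (locally l).
Proof.
  intros Hs. apply (filterlim_cauchy_le _ (FF := Rbar_locally_filter p_infty)). intros eps.
  assert (He := cond_pos eps).
  exists (fun u => Rmax 1 (8 / eps) < u). split; [exists (Rmax 1 (8 / eps)); auto |].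
  intros u v Hu Hv Huv.
  assert (Hm1 := Rmax_l 1 (8 / eps)). assert (Hm2 := Rmax_r 1 (8 / eps)).
  rewrite Gamma_primitive_sub by lra.
  rewrite Rabs_pos_eq by (apply RInt_Gamma_integrand_ge0; lra).
  apply Rlt_trans with (8 / u); [apply RInt_Gamma_integrand_tail; lra |].
  apply Rmult_lt_reg_r with (u / eps); [apply Rdiv_lt_0_compat; lra |].
  replace (8 / u * (u / eps)) with (8 / eps) by (field; lra).
  replace (eps * (u / eps)) with u by (field; lra). lra.
Qed.

Lemma filter_prod_at_right_0_p_infty (P : R -> Prop) : (forall x, 0 < x -> P x) ->
  filter_prod (at_right 0) (Rbar_locally p_infty)
    (fun ab => forall x, Rmin (fst ab) (snd ab) <= x <= Rmax (fst ab) (snd ab) -> P x).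
Proof.
  intros HP. apply Filter_prod with (fun a => 0 < a) (fun c => 0 < c).
  - exists (mkposreal 1 Rlt_0_1). intros y _ Hy. exact Hy.
  - exists 0. auto.
  - intros a c Ha Hc x Hx. simpl in Hx. apply HP.
    assert (0 < Rmin a c) by (apply Rmin_glb_lt; lra). lra.
Qed.

Lemma is_RInt_gen_Gamma_integrand (s la lb : R) :
  filterlim (Gamma_primitive s) (at_right 0) (locally la) ->
  filterlim (Gamma_primitive s) (Rbar_locally p_infty) (locally lb) ->
  is_RInt_gen (Gamma_integrand s) (at_right 0) (Rbar_locally p_infty) (lb - la).
Proof.
  intros Hla Hlb.
  assert (Hder : forall x, 0 < x -> Derive (Gamma_primitive s) x = Gamma_integrand s x)
    by (intros x Hx; apply is_derive_unique, is_derive_Gamma_primitive, Hx).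
  apply is_RInt_gen_ext with (f := Derive (Gamma_primitive s)).
  { eapply filter_imp; [| apply (filter_prod_at_right_0_p_infty _ Hder)].
    intros ab H x Hx. apply H. lra. }
  apply is_RInt_gen_Derive; [| | exact Hla | exact Hlb]; apply filter_prod_at_right_0_p_infty.
  - intros x Hx. eexists. apply is_derive_Gamma_primitive, Hx.
  - intros x Hx. apply continuous_ext_loc with (Gamma_integrand s).
    + assert (Hx2 : 0 < x / 2) by lra. exists (mkposreal _ Hx2). intros y Hy.
      apply Rabs_lt_between' in Hy. simpl in Hy. symmetry. apply Hder. lra.
    + apply Gamma_integrand_continuous, Hx.
Qed.

Lemma Gamma_pos (s : R) : 1 <= s <= 2 -> 0 < Gamma s.
Proof.
  intros Hs.
  destruct (Gamma_primitive_lim_0 s ltac:(lra)) as [la Hla].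
  destruct (Gamma_primitive_lim_infty s Hs) as [lb Hlb].
  assert (HG : Gamma s = lb - la)
    by exact (is_RInt_gen_unique _ _ (is_RInt_gen_Gamma_integrand s la lb Hla Hlb)).
  assert (Hla1 : la <= Gamma_primitive s 1).
  { change (Rbar_le la (Gamma_primitive s 1)).
    apply (filterlim_le (F := at_right 0) (Gamma_primitive s) (fun _ => Gamma_primitive s 1));
      [| exact Hla | apply filterlim_const].
    exists (mkposreal 1 Rlt_0_1). intros y Hy Hy0.
    apply Rabs_lt_between' in Hy. simpl in Hy. apply Gamma_primitive_le. lra. }
  assert (Hlb2 : Gamma_primitive s 2 <= lb).
  { change (Rbar_le (Gamma_primitive s 2) lb).
    apply (filterlim_le (F := Rbar_locally p_infty) (fun _ => Gamma_primitive s 2) (Gamma_primitive s));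
      [| apply filterlim_const | exact Hlb].
    exists 2. intros y Hy. apply Gamma_primitive_le. lra. }
  assert (H12 : 0 < Gamma_primitive s 2 - Gamma_primitive s 1).
  { rewrite Gamma_primitive_sub by lra. apply RInt_gt_0; [lra | |].
    - intros; apply Gamma_integrand_pos.
    - intros x Hx. apply Gamma_integrand_continuous. lra. }
  rewrite HG. lra.
Qed.

Lemma ln_le_sub_1 (x : R) : 0 < x -> ln x <= x - 1.
Proof. intros Hx. assert (H := exp_ineq1_le (ln x)). rewrite exp_ln in H by exact Hx. lra. Qed.

Lemma ln_div_le (x y : R) : 0 < x -> 0 < y -> ln (x / y) <= (x - y) / y.
Proof.
  intros Hx Hy. replace ((x - y) / y) with (x / y - 1) by (field; lra).
  apply ln_le_sub_1, Rdiv_lt_0_compat; assumption.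
Qed.

Lemma ln_div_ge (x y : R) : 0 < x -> 0 < y -> (x - y) / x <= ln (x / y).
Proof.
  intros Hx Hy. assert (H := ln_div_le y x Hy Hx).
  rewrite ln_div in H |- * by assumption.
  replace ((x - y) / x) with (- ((y - x) / x)) by (field; lra). lra.
Qed.

Section Grid.

Variables (a0 T : R) (N : nat).
Hypotheses (Ha0 : 0 < a0) (Htau : 0 < tau a0 T N).

Local Notation t := (tk a0 T N).

Lemma tk_pos (j : nat) : 0 < t j.
Proof. unfold tk. assert (H := pos_INR j). nra. Qed.

Lemma ln_tk_div_chain (i j k : nat) : ln (t k / t i) = ln (t k / t j) + ln (t j / t i).
Proof. rewrite !ln_div by apply tk_pos. ring. Qed.

Lemma ln_tk_div_pos (i j : nat) : (i < j)%nat -> 0 < ln (t j / t i).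
Proof.
  intros Hij. rewrite <- ln_1. apply ln_increasing; [lra |].
  assert (H := tk_pos i). apply Rmult_lt_reg_r with (t i); [exact H |].
  replace (t j / t i * t i) with (t j) by (field; lra).
  unfold tk. apply lt_INR in Hij. nra.
Qed.

Lemma ln_tk_div_21_le_10 : ln (t 2 / t 1) <= ln (t 1 / t 0).
Proof.
  assert (H0 := tk_pos 0). assert (H1 := tk_pos 1).
  apply ln_le; [apply Rdiv_lt_0_compat; apply tk_pos |].
  apply Rmult_le_reg_r with (t 1 * t 0); [nra |].
  replace (t 2 / t 1 * (t 1 * t 0)) with (t 2 * t 0) by (field; lra).
  replace (t 1 / t 0 * (t 1 * t 0)) with (t 1 * t 1) by (field; lra).
  unfold tk; simpl. nra.
Qed.

Lemma ln_tk_div_0_le (k : nat) : ln (t k / t 0) <= INR k * tau a0 T N / a0.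
Proof.
  eapply Rle_trans; [apply ln_div_le; apply tk_pos |].
  unfold tk; simpl. right. field. lra.
Qed.

Lemma ln_tk_div_0_le_4 (k : nat) : (3 <= k)%nat -> tau a0 T N <= a0 / 6 ->
  ln (t k / t 0) <= 4 * ln (t k / t 2).
Proof.
  intros Hk Hsmall. rewrite (ln_tk_div_chain 0 2 k).
  assert (Hk3 : 3 <= INR k) by (replace 3 with (INR 3) by (simpl; ring); apply le_INR; exact Hk).
  assert (Hx := ln_div_le (t 2) (t 0) (tk_pos 2) (tk_pos 0)).
  assert (Hy := ln_div_ge (t k) (t 2) (tk_pos k) (tk_pos 2)).
  assert (Htk := tk_pos k).
  set (h := tau a0 T N) in *.
  assert (E0 : (t 2 - t 0) / t 0 = 2 * h / a0) by (unfold tk, h; simpl; field; lra).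
  assert (E2 : (t k - t 2) / t k = (INR k - 2) * h / t k)
    by (apply Rmult_eq_compat_r; unfold tk, h; simpl; ring).
  assert (Hcmp : 2 * h / a0 <= 3 * ((INR k - 2) * h / t k)).
  { assert (Hbig : 2 * t k <= 3 * (INR k - 2) * a0) by (unfold tk; fold h; nra).
    apply Rmult_le_reg_r with (a0 * t k); [nra |].
    replace (2 * h / a0 * (a0 * t k)) with (2 * h * t k) by (field; lra).
    replace (3 * ((INR k - 2) * h / t k) * (a0 * t k)) with (3 * (INR k - 2) * a0 * h)
      by (field; lra).
    nra. }
  lra.
Qed.

Lemma ccoef_1_1_eq (al : R) :
  ccoef a0 T N al 1 1 = Rpower (ln (t 1 / t 0)) (1 - al) / (Gamma (2 - al) * ln (t 1 / t 0)).
Proof.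
  unfold ccoef, acoef; cbv zeta. change (1 - 1)%nat with 0%nat. cbn [Nat.eqb].
  replace (t 1 / t 1) with 1 by (field; apply Rgt_not_eq, tk_pos).
  rewrite ln_1, rpow_0_l, rpow_pos, Rminus_0_r by (apply ln_tk_div_pos; lia).
  reflexivity.
Qed.

Lemma ccoef_1_eq (al : R) (k : nat) : (2 <= k)%nat ->
  ccoef a0 T N al 1 k = c1_numerator al (ln (t k / t 2)) (ln (t 2 / t 1)) (ln (t 1 / t 0))
                        / (Gamma (2 - al) * ln (t 1 / t 0)).
Proof.
  intros Hk. unfold ccoef, acoef, bcoef; cbv zeta.
  rewrite (proj2 (Nat.eqb_neq k 1)) by lia.
  change (1 - 1)%nat with 0%nat. change (2 - 2)%nat with 0%nat. change (2 - 1)%nat with 1%nat.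
  cbn [Nat.eqb].
  rewrite (ln_tk_div_chain 0 1 k), (ln_tk_div_chain 1 2 k), (ln_tk_div_chain 0 1 2).
  reflexivity.
Qed.

Lemma ccoef_1_gt (al : R) (k : nat) : 0 < al < 1 / 2 -> tau a0 T N <= a0 / 6 -> (1 <= k)%nat ->
  al / (3 * Gamma (2 - al)) * Rpower (ln (t k / t 0)) (- al) < ccoef a0 T N al 1 k.
Proof.
  intros Hal Hsmall Hk.
  assert (HG : 0 < Gamma (2 - al)) by (apply Gamma_pos; lra).
  assert (Hh1 : 0 < ln (t 1 / t 0)) by (apply ln_tk_div_pos; lia).
  assert (Hh2 : 0 < ln (t 2 / t 1)) by (apply ln_tk_div_pos; lia).
  assert (Hh21 := ln_tk_div_21_le_10).
  assert (Hscale : forall kap s, al / 3 < kap ->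
            kap * ln (t 1 / t 0) * Rpower (ln (t k / t 0)) (- al) <= s ->
            al / (3 * Gamma (2 - al)) * Rpower (ln (t k / t 0)) (- al)
            < s / (Gamma (2 - al) * ln (t 1 / t 0))).
  { intros kap s Hkap Hs.
    assert (HW : 0 < Rpower (ln (t k / t 0)) (- al)) by apply Rpower_pos.
    apply Rmult_lt_reg_r with (Gamma (2 - al) * ln (t 1 / t 0)); [nra |].
    replace (s / (Gamma (2 - al) * ln (t 1 / t 0)) * (Gamma (2 - al) * ln (t 1 / t 0)))
      with s by (field; lra).
    replace (al / (3 * Gamma (2 - al)) * Rpower (ln (t k / t 0)) (- al)
             * (Gamma (2 - al) * ln (t 1 / t 0)))
      with (al / 3 * ln (t 1 / t 0) * Rpower (ln (t k / t 0)) (- al)) by (field; lra).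
    assert (0 < (kap - al / 3) * (ln (t 1 / t 0) * Rpower (ln (t k / t 0)) (- al)))
      by (apply Rmult_lt_0_compat; [lra | apply Rmult_lt_0_compat; lra]).
    nra. }
  destruct (Nat.eq_dec k 1) as [-> | Hk1]; [| destruct (Nat.eq_dec k 2) as [-> | Hk2]].
  - rewrite ccoef_1_1_eq. apply (Hscale 1); [lra |].
    replace (1 - al) with (- al + 1) by ring. rewrite Rpower_plus_1 by exact Hh1. lra.
  - rewrite ccoef_1_eq by lia.
    apply (Hscale (1 - al - al / (2 - al))).
    + assert (E : al / (2 - al) * (2 - al) = al) by (field; lra).
      nra.
    + replace (t 2 / t 2) with 1 by (field; apply Rgt_not_eq, tk_pos).
      rewrite ln_1, (ln_tk_div_chain 0 1 2).
      apply c1_numerator_ge_2; lra.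
  - assert (HL2 : 0 < ln (t k / t 2)) by (apply ln_tk_div_pos; lia).
    assert (H4 := ln_tk_div_0_le_4 k ltac:(lia) Hsmall).
    rewrite ccoef_1_eq by lia.
    apply (Hscale (3 * (1 - al) ^ 2 / 4)); [nra |].
    rewrite (ln_tk_div_chain 0 1 k), (ln_tk_div_chain 1 2 k) in H4 |- *.
    apply c1_numerator_ge; lra.
Qed.

Lemma inv_ccoef_1_lt (al : R) (k : nat) : 0 < al < 1 / 2 -> tau a0 T N <= a0 / 6 ->
  (1 <= k)%nat ->
  / ccoef a0 T N al 1 k < 3 * Gamma (2 - al) / al * Rpower (ln (t k / t 0)) al.
Proof.
  intros Hal Hsmall Hk.
  assert (Hc := ccoef_1_gt al k Hal Hsmall Hk).
  assert (HG : 0 < Gamma (2 - al)) by (apply Gamma_pos; lra).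
  assert (HP : 0 < Rpower (ln (t k / t 0)) al) by apply Rpower_pos.
  assert (Hlow : 0 < al / (3 * Gamma (2 - al)) * Rpower (ln (t k / t 0)) (- al)).
  { apply Rmult_lt_0_compat; [apply Rdiv_lt_0_compat; lra | apply Rpower_pos]. }
  replace (3 * Gamma (2 - al) / al * Rpower (ln (t k / t 0)) al)
    with (/ (al / (3 * Gamma (2 - al)) * Rpower (ln (t k / t 0)) (- al)))
    by (rewrite Rpower_Ropp; field; lra).
  apply Rinv_lt_contravar; [nra | exact Hc].
Qed.

Lemma Rpower_ln_tk_div_0_le (al : R) (k : nat) : 0 <= al -> (1 <= k)%nat ->
  Rpower (ln (t k / t 0)) al * Rpower a0 al <= Rpower (INR k * tau a0 T N) al.
Proof.
  intros Hal Hk.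
  assert (HL0 : 0 < ln (t k / t 0)) by (apply ln_tk_div_pos; lia).
  assert (Hbound := ln_tk_div_0_le k).
  rewrite Rpower_mult_distr by lra.
  apply Rle_Rpower_l; [exact Hal | split; [nra |]].
  apply Rmult_le_reg_r with (/ a0); [apply Rinv_0_lt_compat; lra |].
  replace (ln (t k / t 0) * a0 * / a0) with (ln (t k / t 0)) by (field; lra).
  exact Hbound.
Qed.

End Grid.

Theorem lemma2p6 (al a0 T : R) :
  0 < al < 4701 / 10000 -> 0 < a0 -> a0 < T ->
  exists tau0 : R, 0 < tau0 /\
    forall N : nat, (0 < N)%nat -> tau a0 T N < tau0 ->
      forall k : nat, (1 <= k <= N)%nat ->
        / ccoef a0 T N al 1 k < Calpha a0 al * Rpower (INR k * tau a0 T N) al.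
Proof.
  intros Hal Ha0 HT. exists (a0 / 6). split; [lra |].
  intros N HN Hsmall k Hk.
  assert (Htau : 0 < tau a0 T N)
    by (apply Rdiv_lt_0_compat; [lra | apply lt_0_INR; lia]).
  assert (Hinv : / ccoef a0 T N al 1 k
                 < 3 * Gamma (2 - al) / al * Rpower (ln (tk a0 T N k / tk a0 T N 0)) al)
    by (apply inv_ccoef_1_lt; [exact Ha0 | exact Htau | lra | lra | lia]).
  assert (Hpow := Rpower_ln_tk_div_0_le a0 T N Ha0 Htau al k ltac:(lra) ltac:(lia)).
  assert (HC : 3 * Gamma (2 - al) / (al * Rpower a0 al) <= Calpha a0 al) by apply Rmax_r.
  assert (HG : 0 < Gamma (2 - al)) by (apply Gamma_pos; lra).
  assert (HA : 0 < Rpower a0 al) by apply Rpower_pos.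
  assert (0 < Rpower (INR k * tau a0 T N) al) by apply Rpower_pos.
  replace (3 * Gamma (2 - al) / al * Rpower (ln (tk a0 T N k / tk a0 T N 0)) al)
    with (3 * Gamma (2 - al) / (al * Rpower a0 al)
          * (Rpower (ln (tk a0 T N k / tk a0 T N 0)) al * Rpower a0 al))
    in Hinv by (field; lra).
  assert (0 < 3 * Gamma (2 - al) / (al * Rpower a0 al))
    by (apply Rdiv_lt_0_compat; [lra | apply Rmult_lt_0_compat; lra]).
  nra.
Qed.
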